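(* Let $k$ be a field of characteristic $2$ and $n$ a positive even integer. Then the symmetric bilinear form $\phi^{\mathrm{odd}}_n$ is identically zero, and the nondegenerate part of the symmetric bilinear form $\phi^{\mathrm{even}}_n$ is isomorphic to the orthogonal sum of $2^{s(n)-1}$ copies of $\langle 1 \rangle$.
   Context: $\langle \alpha_1,\dots,\alpha_m\rangle$ denotes the symmetric bilinear form $(x,y)\mapsto x^tAy$ on $k^m$ with $A$ diagonal with entries $\alpha_i$. Define $\phi^{\mathrm{odd}}_n := \bigoplus_{0 \le i < n/2,\ i \text{ odd}} \langle \binom{n}{i}\rangle$ and $\phi^{\mathrm{even}}_n := \bigoplus_{0 \le i < n/2,\ i \text{ even}} \langle \binom{n}{i}\rangle$, binomial coefficients viewed in $k$. The nondegenerate part of a symmetric bilinear form on $V$ is the induced nondegenerate form on $V$ modulo its radical. $s(n)$ is the number of 1's in the binary expansion of $n$. *)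

From HB Require Import structures.
From mathcomp Require Import all_boot all_order all_algebra.
Set Implicit Arguments. Unset Strict Implicit. Unset Printing Implicit Defensive.
Import Order.TTheory GRing.Theory Num.Theory.
Local Open Scope ring_scope.

Section Forms.
Variable k : fieldType.

Definition bform m (A : 'M[k]_m) (x y : 'rV[k]_m) : k := (x *m A *m y^T) 0 0.

Definition diag_form (s : seq k) : 'M[k]_(size s) := diag_mx (\row_(i < size s) s`_i).

Definition in_radical m (A : 'M[k]_m) (x : 'rV[k]_m) : Prop :=
  forall y, bform A x y = 0.

(* The nondegenerate part V/rad(A) of (k^m, A) is isometric to (k^r, B):
   there is a surjective linear map f : k^m -> k^r whose kernel is exactly
   the radical of A and which carries A to B; equivalently the induced map
   V/rad -> k^r is an isometric isomorphism. *)
Definition nondeg_part_isometric m r (A : 'M[k]_m) (B : 'M[k]_r) : Prop :=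
  exists f : 'M[k]_(m, r),
    [/\ row_full f,
        (forall x, x *m f = 0 <-> in_radical A x) &
        (forall x y, bform A x y = bform B (x *m f) (y *m f))].

(* phi^odd_n and phi^even_n : entries binom(n,i) for 0 <= i < n/2 (i.e. 2i < n)
   with i odd, resp. even. *)
Definition phi_odd_entries (n : nat) : seq k :=
  [seq ('C(n, i))%:R | i <- iota 0 n & odd i && (i.*2 < n)%N].
Definition phi_even_entries (n : nat) : seq k :=
  [seq ('C(n, i))%:R | i <- iota 0 n & ~~ odd i && (i.*2 < n)%N].

Definition phi_odd (n : nat) := diag_form (phi_odd_entries n).
Definition phi_even (n : nat) := diag_form (phi_even_entries n).

End Forms.

(* s(n): number of 1's in the binary expansion of n (bit i is odd (n / 2^i);
   bits i >= n vanish since n < 2^n). *)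
Definition s2 (n : nat) : nat := \sum_(i < n) odd (n %/ 2 ^ i).

From HB Require Import structures.
From mathcomp Require Import all_boot all_order all_algebra zify.
Import Order.TTheory GRing.Theory Num.Theory.

Set Implicit Arguments.
Unset Strict Implicit.
Unset Printing Implicit Defensive.

(* In characteristic 2 only the parity of the binomial coefficients matters.
   Modulo 2, binom(2m, 2j) = binom(m, j) and binom(2m, 2j+1) = 0, so every
   entry of phi^odd_(2m) vanishes, while phi^even_(2m) is diagonal with entries
   0 and 1, the number of 1's being the number of j with 2j < m and binom(m, j)
   odd.  Splitting that count by the parity of j shows that it is unchanged by
   m -> 2m and doubled by m -> 2m+1 (for m > 0, since the central coefficient
   binom(2t, t) is even), hence equals 2^(s(m)-1) = 2^(s(2m)-1).  Finally, the
   nondegenerate part of a diagonal form with entries 0 and 1 is the unit form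
   on the coordinates carrying a 1. *)

Lemma binary_ind (P : nat -> Prop) :
  P 0 -> (forall m, P m -> P m.*2.+1) -> (forall m, 0 < m -> P m -> P m.*2) ->
  forall n, P n.
Proof.
move=> P0 Podd Peven; elim/ltn_ind=> n IH.
have [n_odd|n_even] := boolP (odd n).
  have n_eq : n = n./2.*2.+1 by rewrite -[LHS]odd_double_half n_odd.
  by rewrite n_eq; apply/Podd/IH; lia.
have n_eq := esym (even_halfK n_even).
case: (posnP n./2) => [n2_0|n2_gt0]; first by rewrite n_eq n2_0.
by rewrite n_eq; apply/Peven/IH => //; lia.
Qed.

Lemma s2_half n : s2 n = odd n + s2 n./2.
Proof.
have s2_widen m N : m <= N -> s2 m = \sum_(i < N) odd (m %/ 2 ^ i).
  move=> le_mN; rewrite /s2 (big_ord_widen N (fun i => odd (m %/ 2 ^ i) : nat) le_mN).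
  rewrite big_mkcond /=; apply: eq_bigr => i _; case: ltnP => // le_mi.
  by rewrite divn_small // (leq_trans (ltn_expl m (ltnSn 1))) // leq_exp2l.
rewrite (s2_widen n n.+1) // big_ord_recl expn0 divn1 (s2_widen n./2 n); last first.
  by rewrite -divn2 leq_div.
by congr (_ + _); apply: eq_bigr => i _; rewrite expnS divnMA divn2.
Qed.

Lemma s2_double m : s2 m.*2 = s2 m.
Proof. by rewrite s2_half odd_double doubleK. Qed.

Lemma s2_doubleS m : s2 m.*2.+1 = (s2 m).+1.
Proof. by rewrite s2_half /= odd_double uphalf_double. Qed.

Lemma s2_gt0 n : 0 < n -> 0 < s2 n.
Proof.
elim/binary_ind: n => // [m _ _|m m_gt0 IH _]; first by rewrite s2_doubleS.
by rewrite s2_double IH.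
Qed.

Lemma odd_binSS n j : odd 'C(n.+2, j.+2) = odd 'C(n, j.+2) (+) odd 'C(n, j).
Proof.
rewrite !binS !oddD.
by case: (odd 'C(n, j)); case: (odd 'C(n, j.+1)); case: (odd 'C(n, j.+2)).
Qed.

Lemma odd_bin_double m j :
  odd 'C(m.*2, j.*2) = odd 'C(m, j) /\ odd 'C(m.*2, j.*2.+1) = false.
Proof.
elim: m j => [|m IH] [|j] //; first by rewrite doubleS bin1 /= odd_double.
have [IHj1 IHj1S] := IH j.+1; have [IHj IHjS] := IH j.
rewrite doubleS in IHj1 IHj1S.
by rewrite !doubleS !odd_binSS IHj1 IHj IHj1S IHjS binS oddD.
Qed.

Lemma odd_bin_double_double m j : odd 'C(m.*2, j.*2) = odd 'C(m, j).
Proof. exact: (odd_bin_double m j).1. Qed.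

Lemma odd_bin_double_doubleS m j : odd 'C(m.*2, j.*2.+1) = false.
Proof. exact: (odd_bin_double m j).2. Qed.

Lemma odd_bin_doubleS_double m j : odd 'C(m.*2.+1, j.*2) = odd 'C(m, j).
Proof.
case: j => [|j]; first by rewrite !bin0.
by rewrite doubleS binS oddD -doubleS odd_bin_double_double odd_bin_double_doubleS addbF.
Qed.

Lemma odd_bin_doubleS_doubleS m j : odd 'C(m.*2.+1, j.*2.+1) = odd 'C(m, j).
Proof. by rewrite binS oddD odd_bin_double_doubleS odd_bin_double_double. Qed.

Lemma odd_bin_central t : 0 < t -> odd 'C(t.*2, t) = false.
Proof.
case: t => [|u] // _.
have bin_sym : 'C(u.*2.+1, u.+1) = 'C(u.*2.+1, u).
  by rewrite -[in RHS]bin_sub; [congr 'C(_, _); lia | lia].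
by rewrite doubleS binS bin_sym addnn odd_double.
Qed.

Lemma count_iota_double (P : pred nat) a :
  count P (iota 0 a.*2) =
  count (fun j => P j.*2) (iota 0 a) + count (fun j => P j.*2.+1) (iota 0 a).
Proof.
elim: a => // a IH.
by rewrite doubleS -[a.*2.+2]addn2 -[a.+1]addn1 !iotaD !count_cat IH /= !addn0 addnACA.
Qed.

Lemma count_iota_widen (P : pred nat) M N :
  M <= N -> (forall j, P j -> j < M) -> count P (iota 0 N) = count P (iota 0 M).
Proof.
move=> le_MN P_lt; rewrite -(subnKC le_MN) iotaD count_cat add0n.
rewrite -[RHS]addn0; congr (_ + _); apply/eqP; rewrite -leqn0 leqNgt -has_count.
by apply/hasP=> -[j]; rewrite mem_iota leqNgt => /andP[/negP + _] /P_lt.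
Qed.

Definition low_odd_binomials m := count (fun j => (j.*2 < m) && odd 'C(m, j)) (iota 0 m).

Lemma low_odd_binomialsE m N :
  m <= N -> low_odd_binomials m = count (fun j => (j.*2 < m) && odd 'C(m, j)) (iota 0 N).
Proof.
by move=> le_mN; rewrite (count_iota_widen le_mN) // => j /andP[lt_jm _]; lia.
Qed.

Lemma low_odd_binomials_double m : low_odd_binomials m.*2 = low_odd_binomials m.
Proof.
rewrite /low_odd_binomials count_iota_double [X in _ + X](eq_count (a2 := pred0)).
  rewrite count_pred0 addn0; apply: eq_count => j.
  by rewrite /= ltn_double odd_bin_double_double.
by move=> j; rewrite /= odd_bin_double_doubleS andbF.
Qed.

Lemma low_odd_binomials_doubleS m :
  0 < m -> low_odd_binomials m.*2.+1 = (low_odd_binomials m).*2.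
Proof.
move=> m_gt0; rewrite (low_odd_binomialsE (N := m.+1.*2)) // count_iota_double.
rewrite -[RHS]addnn !(low_odd_binomialsE (N := m.+1)) //.
congr (_ + _); apply: eq_count => j /=.
  (* The extra index j = m/2 contributes nothing: binom(2j, j) is even. *)
  rewrite odd_bin_doubleS_double ltnS leq_double leq_eqVlt.
  case: eqP => //= m_eq; move: m_gt0; rewrite -m_eq double_gt0 => j_gt0.
  by rewrite ltnn odd_bin_central.
by rewrite odd_bin_doubleS_doubleS ltnS leq_double.
Qed.

Lemma low_odd_binomials_pow2 m : 0 < m -> low_odd_binomials m = 2 ^ (s2 m - 1).
Proof.
elim/binary_ind: m => // [m IH _|m m_gt0 IH _]; last first.
  by rewrite low_odd_binomials_double IH // s2_double.
case: (posnP m) => [->|m_gt0]; first by rewrite s2_doubleS /s2 big_ord0.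
rewrite low_odd_binomials_doubleS // IH // -mul2n -expnS s2_doubleS subSS subn0.
by rewrite subn1 prednK // s2_gt0.
Qed.

Local Open Scope ring_scope.

Lemma natr_pchar2 (R : nzSemiRingType) (c : nat) :
  2%N \in [pchar R] -> c%:R = (odd c)%:R :> R.
Proof.
move=> char2; rewrite -[in LHS](odd_double_half c) natrD -muln2 natrM.
by rewrite (pcharf0 char2) mulr0 addr0.
Qed.

Section NondegeneratePart.

Variable k : fieldType.

Lemma bformE m (A : 'M[k]_m) x y : bform A x y = bform 1%:M (x *m A) y.
Proof. by rewrite /bform mulmx1. Qed.

Lemma bform1_delta m (u : 'rV[k]_m) j : bform 1%:M u (delta_mx 0 j) = u 0 j.
Proof. by rewrite /bform mulmx1 trmx_delta -colE !mxE. Qed.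

Lemma bform_diag m (d : 'rV[k]_m) x y :
  bform (diag_mx d) x y = \sum_i x 0 i * d 0 i * y 0 i.
Proof. by rewrite /bform mul_mx_diag !mxE; apply: eq_bigr => i _; rewrite !mxE. Qed.

Lemma nondeg_part_isometric_unitmx m r (A : 'M[k]_m) (B : 'M[k]_r) (f : 'M_(m, r)) :
  row_full f -> B \in unitmx ->
  (forall x y, bform A x y = bform B (x *m f) (y *m f)) ->
  nondeg_part_isometric A B.
Proof.
move=> f_full B_unit f_isom; exists f; split=> // x; split.
  by move=> xf0 y; rewrite f_isom xf0 /bform !mul0mx mxE.
have [g gf1] := row_fullP f_full.
move=> x_rad; have xfB0 : x *m f *m B = 0.
  apply/rowP => j; rewrite [RHS]mxE -bform1_delta -bformE.
  by rewrite -[delta_mx 0 j]mulmx1 -gf1 mulmxA -f_isom x_rad.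
by rewrite -(mulmxK B_unit (x *m f)) xfB0 mul0mx.
Qed.

Lemma nondeg_part_diag01 m (d : 'rV[k]_m) :
  (forall i, d 0 i = 0 \/ d 0 i = 1) ->
  nondeg_part_isometric (diag_mx d) (1%:M : 'M_#|[set i | d 0 i != 0]|).
Proof.
move=> d01; set J := [set i | d 0 i != 0].
pose f : 'M[k]_(m, #|J|) := colsub enum_val 1%:M.
have xfE (x : 'rV_m) : x *m f = colsub enum_val x by rewrite mulmx_colsub mulmx1.
apply: (nondeg_part_isometric_unitmx (f := f)); last 1 first.
- move=> x y; rewrite bform_diag /bform mulmx1 !xfE mxE.
  under [RHS]eq_bigr do rewrite !mxE.
  rewrite -(big_enum_val (fun i => x 0 i * y 0 i)) [RHS]big_mkcond; apply: eq_bigr => i _.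
  by rewrite inE; case: (d01 i) => ->; rewrite ?eqxx ?oner_neq0 ?mulr0 ?mul0r ?mulr1.
- apply/row_fullP; exists f^T; apply/matrixP => j j'.
  by rewrite trmx_mxsub mul_rowsub_mx mulmx_colsub trmx1 mulmx1 !mxE (inj_eq enum_val_inj).
- by rewrite unitmx1.
Qed.

Lemma card_row_seq_neq0 (s : seq k) :
  #|[set i : 'I_(size s) | (\row_(i < size s) s`_i) 0 i != 0]| = count (predC1 0) s.
Proof.
rewrite -[in RHS](mkseq_nth 0 s) /mkseq -val_enum_ord -map_comp count_map enumT.
rewrite cardsE cardE /enum_mem size_filter.
by apply: eq_count => i; rewrite /= /in_mem /= mxE.
Qed.

Lemma diag_form_eq0 (s : seq k) : {in s, forall x, x = 0} -> diag_form s = 0.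
Proof.
by move=> s0; apply/matrixP => i j; rewrite !mxE (s0 s`_i) ?mul0rn // mem_nth.
Qed.

Lemma nondeg_part_diag_form01 (s : seq k) :
  {in s, forall x, x = 0 \/ x = 1} ->
  nondeg_part_isometric (diag_form s) (1%:M : 'M_(count (predC1 0) s)).
Proof.
move=> s01; rewrite -card_row_seq_neq0; apply: nondeg_part_diag01 => i.
by rewrite mxE; apply/s01/mem_nth.
Qed.

End NondegeneratePart.

Section CharacteristicTwo.

Variable k : fieldType.
Hypothesis char2 : 2%N \in [pchar k].

Lemma phi_odd_entries_eq0 n : ~~ odd n -> {in phi_odd_entries k n, forall x, x = 0}.
Proof.
move=> n_even x /mapP[i]; rewrite mem_filter => /andP[/andP[i_odd _] _] ->.
rewrite natr_pchar2 // -(even_halfK n_even) -(odd_double_half i) i_odd add1n.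
by rewrite odd_bin_double_doubleS.
Qed.

Lemma phi_even_entries01 n : {in phi_even_entries k n, forall x, x = 0 \/ x = 1}.
Proof. by move=> x /mapP[i _ ->]; rewrite natr_pchar2 //; case: odd; [right | left]. Qed.

Lemma count_phi_even_entries_neq0 m :
  count (predC1 0) (phi_even_entries k m.*2) = low_odd_binomials m.
Proof.
rewrite count_map count_filter count_iota_double.
rewrite [X in (_ + X)%N](eq_count (a2 := pred0)) ?count_pred0 ?addn0; last first.
  by move=> j; rewrite /= odd_double andbF.
apply: eq_count => j; rewrite /= natr_pchar2 // odd_bin_double_double odd_double ltn_double.
by case: odd; rewrite ?oner_neq0 ?eqxx ?andbF ?andbT.
Qed.

End CharacteristicTwo.

Theorem theoremB (k : fieldType) (n : nat) :
  (2%N \in [pchar k]) -> (0 < n)%N -> ~~ odd n ->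
  phi_odd k n = 0 /\
  nondeg_part_isometric (phi_even k n) (1%:M : 'M[k]_(2 ^ (s2 n - 1))).
Proof.
move=> char2 n_gt0 n_even; split.
  exact/diag_form_eq0/(phi_odd_entries_eq0 char2 n_even).
rewrite -(even_halfK n_even) in n_gt0 *; rewrite double_gt0 in n_gt0.
rewrite s2_double -low_odd_binomials_pow2 // -(count_phi_even_entries_neq0 char2).
exact/nondeg_part_diag_form01/(phi_even_entries01 char2).
Qed.
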